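(* Let $B>0$ and let $y_1,y_2,y_3,y_4$ be defined for $t>0$, $x\in\mathbb{R}\setminus\{0\}$, $u=x/(Bt)^{1/4}$ by $y_{1}=(Bt)^{1/4}[\tfrac{1}{\sqrt2}z_2(u)-\tfrac{1}{2\Gamma(3/4)}z_3(u)+\tfrac{1}{6\sqrt2\Gamma(1/2)}z_4(u)]$, $y_{2}=(Bt)^{1/4}[\tfrac{1}{\Gamma(5/4)}z_1(u)-\tfrac{1}{\sqrt2}z_2(u)+\tfrac{1}{6\sqrt2\Gamma(1/2)}z_4(u)]$, $y_{3}=(Bt)^{1/4}[\tfrac{1}{\sqrt2}z_2(u)+\tfrac{1}{2\Gamma(3/4)}z_3(u)+\tfrac{1}{6\sqrt2\Gamma(1/2)}z_4(u)]$, $y_{4}=(Bt)^{1/4}[\tfrac{1}{\Gamma(5/4)}z_1(u)+\tfrac{1}{\sqrt2}z_2(u)-\tfrac{1}{6\sqrt2\Gamma(1/2)}z_4(u)]$, where $z_{1}(u)={}_{1}F_{3}(-\tfrac{1}{4};\tfrac{1}{4},\tfrac{1}{2},\tfrac{3}{4};\tfrac{u^{4}}{256})$, $z_{2}(u)=u$, $z_{3}(u)=u^{2}\,{}_{1}F_{3}(\tfrac{1}{4};\tfrac{3}{4},\tfrac{5}{4},\tfrac{3}{2};\tfrac{u^{4}}{256})$, $z_{4}(u)=u^{3}\,{}_{1}F_{3}(\tfrac{1}{2};\tfrac{5}{4},\tfrac{3}{2},\tfrac{7}{4};\tfrac{u^{4}}{256})$. Then for $t>0$, $\lim_{x\to\infty}y_3(t,x)=\infty$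 and $\lim_{x\to\infty}y_4(t,x)=-\infty$; for $x>0$, $\lim_{t\to0}y_3(t,x)=\infty$ and $\lim_{t\to0}y_4(t,x)=-\infty$. Similarly, for $t>0$, $\lim_{x\to-\infty}y_1(t,x)=\lim_{x\to-\infty}y_2(t,x)=-\infty$, and for $x>0$, $\lim_{t\to0}y_1(t,-x)=\lim_{t\to0}y_2(t,-x)=-\infty$.
   Context: ${}_{p}F_{q}(a_{1},\ldots,a_{p};b_{1},\ldots,b_{q};\nu)=\sum_{k\ge0}\frac{(a_{1})_{k}\cdots(a_{p})_{k}}{(b_{1})_{k}\cdots(b_{q})_{k}}\frac{\nu^{k}}{k!}$ is the generalized hypergeometric function, with Pochhammer symbol $(\lambda)_{k}=\lambda(\lambda+1)\cdots(\lambda+k-1)$, $(\lambda)_0=1$. $\Gamma$ is the Gamma function. *)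

From Stdlib Require Import Reals.
From Coquelicot Require Import Coquelicot.
Open Scope R_scope.

Fixpoint poch (a : R) (k : nat) : R :=
  match k with
  | O => 1
  | S k' => poch a k' * (a + INR k')
  end.

Definition hyp1F3 (a b1 b2 b3 nu : R) : R :=
  Series (fun k => poch a k / (poch b1 k * poch b2 k * poch b3 k)
                   * nu ^ k / INR (Factorial.fact k)).

Definition Gamma (s : R) : R :=
  RInt_gen (fun t => Rpower t (s - 1) * exp (- t))
           (at_right 0) (Rbar_locally p_infty).

Definition z1 (u : R) : R := hyp1F3 (-1/4) (1/4) (1/2) (3/4) (u ^ 4 / 256).
Definition z2 (u : R) : R := u.
Definition z3 (u : R) : R := u ^ 2 * hyp1F3 (1/4) (3/4) (5/4) (3/2) (u ^ 4 / 256).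
Definition z4 (u : R) : R := u ^ 3 * hyp1F3 (1/2) (5/4) (3/2) (7/4) (u ^ 4 / 256).

Definition scl (B t : R) : R := Rpower (B * t) (1/4).
Definition uu (B t x : R) : R := x / scl B t.

Definition y1 (B t x : R) : R :=
  scl B t * (1 / sqrt 2 * z2 (uu B t x) - 1 / (2 * Gamma (3/4)) * z3 (uu B t x)
             + 1 / (6 * sqrt 2 * Gamma (1/2)) * z4 (uu B t x)).
Definition y2 (B t x : R) : R :=
  scl B t * (1 / Gamma (5/4) * z1 (uu B t x) - 1 / sqrt 2 * z2 (uu B t x)
             + 1 / (6 * sqrt 2 * Gamma (1/2)) * z4 (uu B t x)).
Definition y3 (B t x : R) : R :=
  scl B t * (1 / sqrt 2 * z2 (uu B t x) + 1 / (2 * Gamma (3/4)) * z3 (uu B t x)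
             + 1 / (6 * sqrt 2 * Gamma (1/2)) * z4 (uu B t x)).
Definition y4 (B t x : R) : R :=
  scl B t * (1 / Gamma (5/4) * z1 (uu B t x) + 1 / sqrt 2 * z2 (uu B t x)
             - 1 / (6 * sqrt 2 * Gamma (1/2)) * z4 (uu B t x)).

(* Every term after the first of the 1F3 series has the sign of the Pochhammer
   symbol of its upper parameter, so the series in z3, z4 are at least 1 and
   the one in z1 (upper parameter -1/4) is at most 1; the Gamma values in the
   coefficients are positive.  Hence, for u >= 1, the bracket P3 of y3
   satisfies P3(u)/u >= c u^2 and the bracket P4 of y4 satisfies
   P4(u)/u <= C - c u^2 with c > 0.  Since y = x * (P(u)/u) with
   u = x/(Bt)^(1/4), and u -> oo both when x -> oo and when t -> 0+, the limits
   for y3 and y4 follow.  As z1, z3 are even and z2, z4 odd,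
   y1(x) = -y3(-x) and y2(x) = y4(-x), which gives the limits for y1, y2. *)

From Stdlib Require Import Reals Lra Psatz Classical.
From Coquelicot Require Import Coquelicot.
Open Scope R_scope.

Lemma poch_pos b k : 0 < b -> 0 < poch b k.
Proof.
  intros Hb; induction k as [|k IH]; simpl; [lra|].
  apply Rmult_lt_0_compat; [exact IH|]. pose proof (pos_INR k); lra.
Qed.

Lemma poch_nonneg a k : 0 <= a -> 0 <= poch a k.
Proof.
  intros Ha; induction k as [|k IH]; simpl; [lra|].
  apply Rmult_le_pos; [exact IH|]. pose proof (pos_INR k); lra.
Qed.

Lemma poch_S_nonpos a k : -1 <= a <= 0 -> poch a (S k) <= 0.
Proof.
  intros Ha; induction k as [|k IH]; [simpl; lra|].
  change (poch a (S (S k))) with (poch a (S k) * (a + INR (S k))).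
  assert (Hk : 0 <= a + INR (S k)) by (rewrite S_INR; pose proof (pos_INR k); lra).
  nra.
Qed.

Lemma Rabs_poch_le a b1 b2 b3 M k :
  0 < b1 -> 0 < b2 -> 0 < b3 -> 0 <= M ->
  (forall j, Rabs (a + INR j) <= M * ((b1 + INR j) * (b2 + INR j) * (b3 + INR j))) ->
  Rabs (poch a k) <= M ^ k * (poch b1 k * poch b2 k * poch b3 k).
Proof.
  intros H1 H2 H3 HM Hj; induction k as [|k IH]; simpl.
  - rewrite Rabs_R1; lra.
  - rewrite Rabs_mult.
    replace (M * M ^ k * (poch b1 k * (b1 + INR k) * (poch b2 k * (b2 + INR k))
                          * (poch b3 k * (b3 + INR k))))
      with ((M ^ k * (poch b1 k * poch b2 k * poch b3 k))
            * (M * ((b1 + INR k) * (b2 + INR k) * (b3 + INR k)))) by ring.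
    apply Rmult_le_compat; auto using Rabs_pos.
Qed.

(* [(b1+j)(b2+j)(b3+j)] dominates both [b1 b2 b3] and [j^3 >= j]. *)
Lemma Rabs_add_INR_le a b1 b2 b3 j : 0 < b1 -> 0 < b2 -> 0 < b3 ->
  Rabs (a + INR j) <= (1 + Rabs a) * (1 + / (b1 * b2 * b3))
                      * ((b1 + INR j) * (b2 + INR j) * (b3 + INR j)).
Proof.
  intros H1 H2 H3.
  set (n := INR j). assert (Hn : 0 <= n) by apply pos_INR.
  set (P := (b1 + n) * (b2 + n) * (b3 + n)).
  assert (Hb : 0 < b1 * b2 * b3) by (repeat apply Rmult_lt_0_compat; lra).
  assert (HPb : b1 * b2 * b3 <= P).
  { unfold P. apply Rmult_le_compat; try apply Rmult_le_compat; nra. }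
  assert (HPn : n ^ 3 <= P).
  { unfold P. simpl. rewrite Rmult_1_r, <- Rmult_assoc.
    apply Rmult_le_compat; try apply Rmult_le_compat; nra. }
  assert (HP1 : 1 <= / (b1 * b2 * b3) * P).
  { apply (Rmult_le_reg_l (b1 * b2 * b3)); [lra|].
    rewrite <- Rmult_assoc, Rinv_r by lra. lra. }
  assert (Hcube : n <= n ^ 3 + 1) by (destruct (Rle_lt_dec n 1); simpl; nra).
  pose proof (Rabs_triang a n) as Htri. rewrite (Rabs_pos_eq n Hn) in Htri.
  pose proof (Rabs_pos a).
  nra.
Qed.

Definition hyp1F3_term (a b1 b2 b3 nu : R) (k : nat) : R :=
  poch a k / (poch b1 k * poch b2 k * poch b3 k) * nu ^ k / INR (Factorial.fact k).

Lemma hyp1F3_term_0 a b1 b2 b3 nu : hyp1F3_term a b1 b2 b3 nu 0 = 1.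
Proof. unfold hyp1F3_term; simpl; field. Qed.

Lemma ex_series_hyp1F3_term a b1 b2 b3 nu : 0 < b1 -> 0 < b2 -> 0 < b3 ->
  ex_series (hyp1F3_term a b1 b2 b3 nu).
Proof.
  intros H1 H2 H3.
  set (M := (1 + Rabs a) * (1 + / (b1 * b2 * b3))).
  assert (HM : 0 <= M).
  { unfold M. pose proof (Rabs_pos a).
    assert (0 < / (b1 * b2 * b3)) by (apply Rinv_0_lt_compat; repeat apply Rmult_lt_0_compat; lra).
    apply Rmult_le_pos; lra. }
  apply (@ex_series_le R_AbsRing R_CompleteNormedModule _
           (fun k => (M * Rabs nu) ^ k * / INR (Factorial.fact k))).
  - intros k. change (norm _) with (Rabs (hyp1F3_term a b1 b2 b3 nu k)).
    unfold hyp1F3_term.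
    pose proof (Rabs_poch_le a b1 b2 b3 M k H1 H2 H3 HM
                  (fun j => Rabs_add_INR_le a b1 b2 b3 j H1 H2 H3)) as Hpoch.
    set (P := poch b1 k * poch b2 k * poch b3 k) in *.
    assert (HP : 0 < P) by (unfold P; repeat apply Rmult_lt_0_compat; apply poch_pos; lra).
    assert (Hf : 0 < INR (Factorial.fact k)) by apply (lt_0_INR _ (Factorial.lt_O_fact k)).
    unfold Rdiv.
    rewrite !Rabs_mult, !Rabs_inv, <- RPow_abs, (Rabs_pos_eq P), (Rabs_pos_eq (INR _)) by lra.
    rewrite Rpow_mult_distr.
    apply Rmult_le_compat_r; [left; apply Rinv_0_lt_compat; lra|].
    apply Rmult_le_compat_r; [apply pow_le, Rabs_pos|].
    apply (Rmult_le_reg_r P); [lra|]. rewrite Rmult_assoc, Rinv_l by lra. lra.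
  - exists (exp (M * Rabs nu)).
    eapply is_series_ext; [|exact (is_exp_Reals (M * Rabs nu))].
    intros n. simpl. rewrite pow_n_pow. reflexivity.
Qed.

Lemma hyp1F3_term_factor a b1 b2 b3 nu k : 0 < b1 -> 0 < b2 -> 0 < b3 -> 0 <= nu ->
  exists w, 0 <= w /\ hyp1F3_term a b1 b2 b3 nu k = poch a k * w.
Proof.
  intros H1 H2 H3 Hnu.
  exists (nu ^ k / (poch b1 k * poch b2 k * poch b3 k * INR (Factorial.fact k))).
  pose proof (poch_pos b1 k H1). pose proof (poch_pos b2 k H2). pose proof (poch_pos b3 k H3).
  assert (Hf : 0 < INR (Factorial.fact k)) by apply (lt_0_INR _ (Factorial.lt_O_fact k)).
  split.
  - apply Rdiv_le_0_compat; [apply pow_le; lra|]. repeat apply Rmult_lt_0_compat; lra.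
  - unfold hyp1F3_term. field. repeat split; lra.
Qed.

Lemma Series_ge_head (a : nat -> R) :
  ex_series a -> (forall n, 0 <= a (S n)) -> a O <= Series a.
Proof.
  intros Ha Hpos. rewrite Series_incr_1 by exact Ha.
  assert (Hzero : Series (fun _ : nat => 0) = 0).
  { transitivity (0 * Series (fun _ : nat => 0)); [|ring].
    rewrite <- Series_scal_l. apply Series_ext. intros; ring. }
  assert (0 <= Series (fun k => a (S k))); [|lra].
  rewrite <- Hzero. apply Series_le; [intros n; split; [lra|apply Hpos]|].
  now apply ex_series_incr_1 in Ha.
Qed.

Lemma Series_le_head (a : nat -> R) :
  ex_series a -> (forall n, a (S n) <= 0) -> Series a <= a O.
Proof.
  intros Ha Hneg.
  assert (Hopp : - a O <= Series (fun n => - a n)); [|rewrite Series_opp in Hopp; lra].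
  apply (Series_ge_head (fun n => - a n)).
  - now apply (@ex_series_opp R_AbsRing R_NormedModule).
  - intros n; specialize (Hneg n); lra.
Qed.

Lemma hyp1F3_ge_1 a b1 b2 b3 nu : 0 <= a -> 0 < b1 -> 0 < b2 -> 0 < b3 -> 0 <= nu ->
  1 <= hyp1F3 a b1 b2 b3 nu.
Proof.
  intros Ha H1 H2 H3 Hnu. unfold hyp1F3. fold (hyp1F3_term a b1 b2 b3 nu).
  rewrite <- (hyp1F3_term_0 a b1 b2 b3 nu) at 1.
  apply Series_ge_head; [now apply ex_series_hyp1F3_term|].
  intros n. destruct (hyp1F3_term_factor a b1 b2 b3 nu (S n)) as [w [Hw ->]]; auto.
  apply Rmult_le_pos; [apply poch_nonneg|]; assumption.
Qed.

Lemma hyp1F3_le_1 a b1 b2 b3 nu : -1 <= a <= 0 -> 0 < b1 -> 0 < b2 -> 0 < b3 -> 0 <= nu ->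
  hyp1F3 a b1 b2 b3 nu <= 1.
Proof.
  intros Ha H1 H2 H3 Hnu. unfold hyp1F3. fold (hyp1F3_term a b1 b2 b3 nu).
  rewrite <- (hyp1F3_term_0 a b1 b2 b3 nu).
  apply Series_le_head; [now apply ex_series_hyp1F3_term|].
  intros n. destruct (hyp1F3_term_factor a b1 b2 b3 nu (S n)) as [w [Hw ->]]; auto.
  pose proof (poch_S_nonpos a n Ha). nra.
Qed.

Lemma filterlim_sup {F : (R -> Prop) -> Prop} {FF : ProperFilter F}
    (D : R -> Prop) (g : R -> R) (K : R) :
  F D -> (forall x, D x -> g x <= K) ->
  (forall x0, D x0 -> F (fun x => g x0 <= g x)) ->
  exists l, filterlim g F (locally l) /\ (forall x, D x -> g x <= l).
Proof.
  intros HD HK Hmono.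
  destruct (filter_ex D HD) as [x1 Hx1].
  destruct (completeness (fun v => exists x, D x /\ v = g x)) as [l [Hub Hlub]].
  - exists K. intros v [x [Hx ->]]. auto.
  - exists (g x1), x1. auto.
  - assert (Hle : forall x, D x -> g x <= l) by (intros x Hx; apply Hub; eauto).
    exists l. split; [|exact Hle].
    intros P [eps Heps]. change (F (fun x => P (g x))).
    destruct (classic (exists x0, D x0 /\ l - eps < g x0)) as [[x0 [Hx0 Hlt]]|Hnone].
    + apply (filter_imp (fun x => D x /\ g x0 <= g x)).
      * intros x [Hx Hgx]. apply Heps. change (Rabs (g x - l) < eps).
        pose proof (Hle x Hx). rewrite Rabs_left1; lra.
      * apply filter_and; auto.
    + exfalso. assert (l <= l - eps); [|destruct eps; simpl in *; lra].
      apply Hlub. intros v [x [Hx ->]]. apply Rnot_lt_le. intros Hlt. apply Hnone; eauto.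
Qed.

Lemma is_RInt_gen_at_point_r {Fa : (R -> Prop) -> Prop} {FFa : Filter Fa} (f : R -> R) b l :
  Fa (fun a => ex_RInt f a b) -> filterlim (fun a => RInt f a b) Fa (locally l) ->
  is_RInt_gen f Fa (at_point b) l.
Proof.
  intros Hex Hlim P HP.
  apply Filter_prod with (Q := fun a => ex_RInt f a b /\ P (RInt f a b)) (R := fun c => c = b).
  - apply filter_and; [exact Hex|exact (Hlim P HP)].
  - reflexivity.
  - intros a c [Ha HPa] Hc; subst c. exists (RInt f a b). split; [|exact HPa].
    now apply (@RInt_correct R_CompleteNormedModule).
Qed.

Lemma is_RInt_gen_at_point_l {Fb : (R -> Prop) -> Prop} {FFb : Filter Fb} (f : R -> R) a l :
  Fb (fun b => ex_RInt f a b) -> filterlim (fun b => RInt f a b) Fb (locally l) ->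
  is_RInt_gen f (at_point a) Fb l.
Proof.
  intros Hex Hlim P HP.
  apply Filter_prod with (Q := fun c => c = a) (R := fun b => ex_RInt f a b /\ P (RInt f a b)).
  - reflexivity.
  - apply filter_and; [exact Hex|exact (Hlim P HP)].
  - intros c b Hc [Hb HPb]; subst c. exists (RInt f a b). split; [|exact HPb].
    now apply (@RInt_correct R_CompleteNormedModule).
Qed.

Section PositiveImproperIntegral.

Variable f : R -> R.
Hypothesis f_cont : forall t, 0 < t -> continuous f t.
Hypothesis f_pos : forall t, 0 < t -> 0 < f t.
Variables K0 K1 : R.
Hypothesis RInt_0_1_bounded : forall a, 0 < a <= 1 -> RInt f a 1 <= K0.
Hypothesis RInt_1_inf_bounded : forall b, 1 <= b -> RInt f 1 b <= K1.

Lemma ex_RInt_pos_half_line a b : 0 < a -> a <= b -> ex_RInt f a b.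
Proof.
  intros Ha Hab. apply (@ex_RInt_continuous R_CompleteNormedModule). intros z Hz.
  rewrite Rmin_left, Rmax_right in Hz by lra. apply f_cont; lra.
Qed.

Lemma RInt_pos_half_line_ge_0 a b : 0 < a -> a <= b -> 0 <= RInt f a b.
Proof.
  intros Ha Hab. apply RInt_ge_0; [lra|now apply ex_RInt_pos_half_line|].
  intros z Hz. left; apply f_pos; lra.
Qed.

Lemma RInt_Chasles_pos a b c :
  0 < a -> a <= b -> b <= c -> RInt f a c = RInt f a b + RInt f b c.
Proof.
  intros Ha Hab Hbc. symmetry. apply (RInt_Chasles f a b c); apply ex_RInt_pos_half_line; lra.
Qed.

Lemma is_RInt_gen_right_0_1 :
  exists l, is_RInt_gen f (at_right 0) (at_point 1) l /\ 0 <= l.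
Proof.
  assert (Hnear : at_right 0 (fun a => 0 < a <= 1)).
  { exists (mkposreal 1 Rlt_0_1). intros a Ha Hpos. split; [exact Hpos|].
    change (Rabs (a - 0) < 1) in Ha. rewrite Rminus_0_r, Rabs_pos_eq in Ha; lra. }
  destruct (filterlim_sup (F := at_right 0) (fun a => 0 < a <= 1) (fun a => RInt f a 1) K0)
    as [l [Hlim Hle]]; [exact Hnear|exact RInt_0_1_bounded| |].
  - intros a0 Ha0. exists (mkposreal a0 (proj1 Ha0)). intros a Ha Hpos.
    change (Rabs (a - 0) < a0) in Ha. rewrite Rminus_0_r, Rabs_pos_eq in Ha by lra.
    rewrite (RInt_Chasles_pos a a0 1) by lra.
    pose proof (RInt_pos_half_line_ge_0 a a0 Hpos ltac:(lra)). lra.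
  - exists l. split.
    + apply is_RInt_gen_at_point_r; [|exact Hlim].
      apply (filter_imp _ _ (fun a Ha => ex_RInt_pos_half_line a 1 (proj1 Ha) (proj2 Ha)) Hnear).
    + apply Rle_trans with (RInt f 1 1); [rewrite RInt_point; apply Rle_refl|]. apply Hle; lra.
Qed.

Lemma is_RInt_gen_1_p_infty :
  exists l, is_RInt_gen f (at_point 1) (Rbar_locally p_infty) l /\ 0 < l.
Proof.
  assert (Hnear : Rbar_locally p_infty (fun b => 1 <= b)) by (exists 1; intros; lra).
  destruct (filterlim_sup (F := Rbar_locally p_infty) (fun b => 1 <= b) (fun b => RInt f 1 b) K1)
    as [l [Hlim Hle]]; [exact Hnear|exact RInt_1_inf_bounded| |].
  - intros b0 Hb0. exists b0. intros b Hb.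
    rewrite (RInt_Chasles_pos 1 b0 b) by lra.
    pose proof (RInt_pos_half_line_ge_0 b0 b ltac:(lra) ltac:(lra)). lra.
  - exists l. split.
    + apply is_RInt_gen_at_point_l; [|exact Hlim].
      apply (filter_imp _ _ (fun b Hb => ex_RInt_pos_half_line 1 b Rlt_0_1 Hb) Hnear).
    + apply Rlt_le_trans with (RInt f 1 2); [|apply Hle; lra].
      apply RInt_gt_0; [lra| |]; intros; [apply f_pos|apply f_cont]; lra.
Qed.

Lemma is_RInt_gen_pos_half_line :
  exists l, is_RInt_gen f (at_right 0) (Rbar_locally p_infty) l /\ 0 < l.
Proof.
  destruct is_RInt_gen_right_0_1 as [l1 [H1 Hl1]].
  destruct is_RInt_gen_1_p_infty as [l2 [H2 Hl2]].
  exists (l1 + l2). split; [exact (is_RInt_gen_Chasles f 1 l1 l2 H1 H2)|lra].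
Qed.

End PositiveImproperIntegral.

Definition Gamma_integrand (s t : R) : R := Rpower t (s - 1) * exp (- t).

Lemma Gamma_integrand_cont s t : 0 < t -> continuous (Gamma_integrand s) t.
Proof.
  intros Ht. apply (@ex_derive_continuous R_AbsRing R_NormedModule).
  unfold Gamma_integrand, Rpower. auto_derive. lra.
Qed.

Lemma Gamma_integrand_pos s t : 0 < t -> 0 < Gamma_integrand s t.
Proof. intros; unfold Gamma_integrand, Rpower. apply Rmult_lt_0_compat; apply exp_pos. Qed.

Lemma RInt_Gamma_integrand_0_1 s a :
  0 < s -> 0 < a <= 1 -> RInt (Gamma_integrand s) a 1 <= / s.
Proof.
  intros Hs Ha.
  set (F := fun t => exp (s * ln t) / s).
  assert (HI : is_RInt (fun t => Rpower t (s - 1)) a 1 (minus (F 1) (F a))).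
  { apply (@is_RInt_derive R_CompleteNormedModule F); intros x Hx;
      rewrite Rmin_left, Rmax_right in Hx by lra.
    - unfold F, Rpower. auto_derive; [lra|].
      replace ((s - 1) * ln x) with (s * ln x + - ln x) by ring.
      rewrite exp_plus, exp_Ropp, exp_ln by lra. field. split; lra.
    - apply (@ex_derive_continuous R_AbsRing R_NormedModule). unfold Rpower. auto_derive. lra. }
  apply Rle_trans with (RInt (fun t => Rpower t (s - 1)) a 1).
  - apply RInt_le; [lra| |eexists; exact HI|].
    + apply (@ex_RInt_continuous R_CompleteNormedModule). intros z Hz.
      rewrite Rmin_left, Rmax_right in Hz by lra. apply Gamma_integrand_cont; lra.
    + intros x Hx. unfold Gamma_integrand. rewrite <- (Rmult_1_r (Rpower x (s - 1))) at 2.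
      apply Rmult_le_compat_l; [unfold Rpower; left; apply exp_pos|].
      rewrite <- exp_0. left; apply exp_increasing; lra.
  - rewrite (is_RInt_unique _ _ _ _ HI). unfold minus, plus, opp, F; simpl.
    rewrite ln_1, Rmult_0_r, exp_0.
    pose proof (exp_pos (s * ln a)).
    assert (0 < / s) by (apply Rinv_0_lt_compat; lra).
    unfold Rdiv. rewrite Rmult_1_l. nra.
Qed.

Lemma RInt_Gamma_integrand_1_b s b :
  s <= 2 -> 1 <= b -> RInt (Gamma_integrand s) 1 b <= 2 * exp (-1).
Proof.
  intros Hs Hb.
  set (F := fun t => - (t + 1) * exp (- t)).
  assert (HI : is_RInt (fun t => t * exp (- t)) 1 b (minus (F b) (F 1))).
  { apply (@is_RInt_derive R_CompleteNormedModule F); intros x _.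
    - unfold F. auto_derive; [exact I|]. ring.
    - apply (@ex_derive_continuous R_AbsRing R_NormedModule). auto_derive. exact I. }
  apply Rle_trans with (RInt (fun t => t * exp (- t)) 1 b).
  - apply RInt_le; [exact Hb| |eexists; exact HI|].
    + apply (@ex_RInt_continuous R_CompleteNormedModule). intros z Hz.
      rewrite Rmin_left, Rmax_right in Hz by lra. apply Gamma_integrand_cont; lra.
    + intros x Hx. unfold Gamma_integrand. apply Rmult_le_compat_r; [left; apply exp_pos|].
      rewrite <- (Rpower_1 x) at 2 by lra. apply Rle_Rpower; lra.
  - rewrite (is_RInt_unique _ _ _ _ HI). unfold minus, plus, opp, F; simpl.
    pose proof (exp_pos (- b)). replace (- (1)) with (-1) by ring. nra.
Qed.

(* [RInt_gen] says nothing before the improper integral is known to converge. *)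
Lemma Gamma_pos s : 0 < s <= 2 -> 0 < Gamma s.
Proof.
  intros Hs.
  destruct (is_RInt_gen_pos_half_line (Gamma_integrand s)
              (Gamma_integrand_cont s) (Gamma_integrand_pos s) (/ s) (2 * exp (-1)))
    as [l [Hl Hpos]].
  - intros a Ha. apply RInt_Gamma_integrand_0_1; lra.
  - intros b Hb. apply RInt_Gamma_integrand_1_b; lra.
  - unfold Gamma. fold (Gamma_integrand s). now rewrite (is_RInt_gen_unique _ _ Hl).
Qed.

Lemma quartic_nonneg u : 0 <= u ^ 4 / 256.
Proof. replace (u ^ 4) with ((u ^ 2) ^ 2) by ring. pose proof (pow2_ge_0 (u ^ 2)). lra. Qed.

Lemma z1_le_1 u : z1 u <= 1.
Proof. apply hyp1F3_le_1; try lra. apply quartic_nonneg. Qed.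

Lemma z3_nonneg u : 0 <= z3 u.
Proof.
  unfold z3. apply Rmult_le_pos; [apply pow2_ge_0|].
  apply Rle_trans with 1; [lra|]. apply hyp1F3_ge_1; try lra. apply quartic_nonneg.
Qed.

Lemma z4_ge_cube u : 0 <= u -> u ^ 3 <= z4 u.
Proof.
  intros Hu. unfold z4. rewrite <- (Rmult_1_r (u ^ 3)) at 1.
  apply Rmult_le_compat_l; [now apply pow_le|].
  apply hyp1F3_ge_1; try lra. apply quartic_nonneg.
Qed.

Lemma pow4_opp u : (- u) ^ 4 = u ^ 4.
Proof. ring. Qed.

Lemma z1_opp u : z1 (- u) = z1 u.
Proof. unfold z1. now rewrite pow4_opp. Qed.

Lemma z3_opp u : z3 (- u) = z3 u.
Proof. unfold z3. rewrite pow4_opp. f_equal. ring. Qed.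

Lemma z4_opp u : z4 (- u) = - z4 u.
Proof. unfold z4. rewrite pow4_opp. ring. Qed.

Definition k1 : R := 1 / Gamma (5/4).
Definition k2 : R := 1 / sqrt 2.
Definition k3 : R := 1 / (2 * Gamma (3/4)).
Definition k4 : R := 1 / (6 * sqrt 2 * Gamma (1/2)).

Lemma k1_pos : 0 < k1.
Proof. unfold k1. pose proof (Gamma_pos (5/4) ltac:(lra)). apply Rdiv_lt_0_compat; lra. Qed.

Lemma k2_pos : 0 < k2.
Proof. unfold k2. pose proof (sqrt_lt_R0 2 ltac:(lra)). apply Rdiv_lt_0_compat; lra. Qed.

Lemma k3_pos : 0 < k3.
Proof. unfold k3. pose proof (Gamma_pos (3/4) ltac:(lra)). apply Rdiv_lt_0_compat; lra. Qed.

Lemma k4_pos : 0 < k4.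
Proof.
  unfold k4. pose proof (Gamma_pos (1/2) ltac:(lra)). pose proof (sqrt_lt_R0 2 ltac:(lra)).
  apply Rdiv_lt_0_compat; [lra|]. repeat apply Rmult_lt_0_compat; lra.
Qed.

Definition profile3 (u : R) : R := k2 * z2 u + k3 * z3 u + k4 * z4 u.
Definition profile4 (u : R) : R := k1 * z1 u + k2 * z2 u - k4 * z4 u.

Lemma y3_profile B t x : y3 B t x = scl B t * profile3 (uu B t x).
Proof. reflexivity. Qed.

Lemma y4_profile B t x : y4 B t x = scl B t * profile4 (uu B t x).
Proof. reflexivity. Qed.

Lemma uu_opp B t x : uu B t (- x) = - uu B t x.
Proof. unfold uu, Rdiv. ring. Qed.

Lemma y1_reflect B t x : y1 B t x = - y3 B t (- x).
Proof. unfold y1, y3. rewrite uu_opp, z3_opp, z4_opp. unfold z2. ring. Qed.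

Lemma y2_reflect B t x : y2 B t x = y4 B t (- x).
Proof. unfold y2, y4. rewrite uu_opp, z1_opp, z4_opp. unfold z2. ring. Qed.

Lemma profile3_div_ge u : 0 < u -> k4 * u ^ 2 <= profile3 u / u.
Proof.
  intros Hu. apply (Rle_div_r _ _ _ Hu). unfold profile3, z2.
  pose proof (z3_nonneg u). pose proof (z4_ge_cube u ltac:(lra)).
  pose proof k2_pos. pose proof k3_pos. pose proof k4_pos.
  replace (k4 * u ^ 2 * u) with (k4 * u ^ 3) by ring.
  assert (0 <= k3 * z3 u) by nra. nra.
Qed.

Lemma profile4_div_le u : 1 <= u -> profile4 u / u <= k1 + k2 - k4 * u ^ 2.
Proof.
  intros Hu. apply (Rle_div_l _ _ _ (Rlt_le_trans _ _ _ Rlt_0_1 Hu)). unfold profile4, z2.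
  pose proof (z1_le_1 u). pose proof (z4_ge_cube u ltac:(lra)).
  pose proof k1_pos. pose proof k4_pos.
  replace ((k1 + k2 - k4 * u ^ 2) * u) with (k1 * u + k2 * u - k4 * u ^ 3) by ring. nra.
Qed.

Lemma filterlim_scal_pos_p_infty {T} {F : (T -> Prop) -> Prop} {FF : Filter F}
    (g : T -> R) (a : R) : 0 < a ->
  filterlim g F (Rbar_locally p_infty) -> filterlim (fun y => a * g y) F (Rbar_locally p_infty).
Proof.
  intros Ha Hg. apply (filterlim_comp _ _ _ g (Rmult a) _ _ _ Hg).
  replace p_infty with (Rbar_mult a p_infty) at 2 by
    (rewrite Rbar_mult_comm; apply is_Rbar_mult_unique, is_Rbar_mult_p_infty_pos, Ha).
  apply filterlim_Rbar_mult_l.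
Qed.

Lemma filterlim_scal_pos_m_infty {T} {F : (T -> Prop) -> Prop} {FF : Filter F}
    (g : T -> R) (a : R) : 0 < a ->
  filterlim g F (Rbar_locally m_infty) -> filterlim (fun y => a * g y) F (Rbar_locally m_infty).
Proof.
  intros Ha Hg. apply (filterlim_comp _ _ _ g (Rmult a) _ _ _ Hg).
  replace m_infty with (Rbar_mult a m_infty) at 2 by
    (rewrite Rbar_mult_comm; apply is_Rbar_mult_unique, is_Rbar_mult_m_infty_pos, Ha).
  apply filterlim_Rbar_mult_l.
Qed.

Lemma is_lim_scal_square c : 0 < c -> is_lim (fun u => c * u ^ 2) p_infty p_infty.
Proof.
  intros Hc. apply (filterlim_scal_pos_p_infty (fun u => u ^ 2) c Hc).
  apply (is_lim_ext (fun u => u * u)); [intros u; ring|].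
  exact (is_lim_mult _ _ _ p_infty p_infty (is_lim_id _) (is_lim_id _) I).
Qed.

Lemma is_lim_quadratic a c : 0 < c -> is_lim (fun u => a - c * u ^ 2) p_infty m_infty.
Proof.
  intros Hc.
  apply (is_lim_plus _ _ _ a m_infty); [apply is_lim_const| |reflexivity].
  apply (is_lim_opp _ _ p_infty), is_lim_scal_square, Hc.
Qed.

Lemma is_lim_profile3_div : is_lim (fun u => profile3 u / u) p_infty p_infty.
Proof.
  apply (is_lim_le_p_loc (fun u => k4 * u ^ 2)).
  - exists 0. intros u Hu. now apply profile3_div_ge.
  - apply is_lim_scal_square, k4_pos.
Qed.

Lemma is_lim_profile4_div : is_lim (fun u => profile4 u / u) p_infty m_infty.
Proof.
  apply (is_lim_le_m_loc (fun u => k1 + k2 - k4 * u ^ 2)).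
  - exists 1. intros u Hu. apply profile4_div_le; lra.
  - apply is_lim_quadratic, k4_pos.
Qed.

(* [Rpower x y] is [exp (y * ln x)], positive even when [x <= 0]. *)
Lemma scl_pos B t : 0 < scl B t.
Proof. unfold scl, Rpower. apply exp_pos. Qed.

Lemma scl_mul_uu (f : R -> R) B t x : x <> 0 ->
  scl B t * f (uu B t x) = x * (f (uu B t x) / uu B t x).
Proof. intros Hx. unfold uu. pose proof (scl_pos B t). field. split; lra. Qed.

Lemma filterlim_uu_p_infty B t : filterlim (uu B t) (Rbar_locally p_infty) (Rbar_locally p_infty).
Proof.
  apply (filterlim_ext (fun x => / scl B t * x)); [intros x; unfold uu, Rdiv; apply Rmult_comm|].
  apply filterlim_scal_pos_p_infty; [apply Rinv_0_lt_compat, scl_pos|apply filterlim_id].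
Qed.

Lemma filterlim_scl_0 B : 0 < B -> filterlim (scl B) (at_right 0) (at_right 0).
Proof.
  intros HB P [eps HP].
  assert (Hdelta : 0 < eps ^ 4 / B) by (apply Rdiv_lt_0_compat; [apply pow_lt, cond_pos|exact HB]).
  exists (mkposreal _ Hdelta). intros t Ht Htpos. apply HP; [|apply scl_pos].
  change (Rabs (t - 0) < eps ^ 4 / B) in Ht. rewrite Rminus_0_r, Rabs_pos_eq in Ht by lra.
  change (Rabs (scl B t - 0) < eps). rewrite Rminus_0_r, Rabs_pos_eq by (left; apply scl_pos).
  assert (Heps : 0 < eps) by apply cond_pos.
  replace (pos eps) with (Rpower (eps ^ 4) (1/4)).
  - apply Rlt_Rpower_l; [lra|split; [nra|]].
    apply (Rmult_lt_compat_l B) in Ht; [|exact HB].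
    replace (B * (eps ^ 4 / B)) with (eps ^ 4) in Ht by (field; lra). exact Ht.
  - rewrite <- Rpower_pow, Rpower_mult by exact Heps. simpl INR.
    replace ((1 + 1 + 1 + 1) * (1 / 4)) with 1 by field. apply Rpower_1, Heps.
Qed.

Lemma filterlim_uu_right_0 B x : 0 < B -> 0 < x ->
  filterlim (fun t => uu B t x) (at_right 0) (Rbar_locally p_infty).
Proof.
  intros HB Hx.
  apply (filterlim_ext (fun t => x * / scl B t)); [reflexivity|].
  apply filterlim_scal_pos_p_infty; [exact Hx|].
  exact (filterlim_comp _ _ _ _ _ _ _ _ (filterlim_scl_0 B HB) filterlim_Rinv_0_right).
Qed.

Lemma is_lim_y3_p_infty B t : is_lim (fun x => y3 B t x) p_infty p_infty.
Proof.
  apply (is_lim_ext_loc (fun x => x * (profile3 (uu B t x) / uu B t x))).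
  - exists 0. intros x Hx. rewrite y3_profile. symmetry. apply scl_mul_uu. lra.
  - apply (is_lim_mult _ _ _ p_infty p_infty); [apply is_lim_id| |exact I].
    exact (filterlim_comp _ _ _ _ _ _ _ _ (filterlim_uu_p_infty B t) is_lim_profile3_div).
Qed.

Lemma is_lim_y4_p_infty B t : is_lim (fun x => y4 B t x) p_infty m_infty.
Proof.
  apply (is_lim_ext_loc (fun x => x * (profile4 (uu B t x) / uu B t x))).
  - exists 0. intros x Hx. rewrite y4_profile. symmetry. apply scl_mul_uu. lra.
  - apply (is_lim_mult _ _ _ p_infty m_infty); [apply is_lim_id| |exact I].
    exact (filterlim_comp _ _ _ _ _ _ _ _ (filterlim_uu_p_infty B t) is_lim_profile4_div).
Qed.

Lemma filterlim_y3_right_0 B x : 0 < B -> 0 < x ->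
  filterlim (fun t => y3 B t x) (at_right 0) (Rbar_locally p_infty).
Proof.
  intros HB Hx.
  apply (filterlim_ext (fun t => x * (profile3 (uu B t x) / uu B t x))).
  { intros t. rewrite y3_profile. symmetry. apply scl_mul_uu. lra. }
  apply filterlim_scal_pos_p_infty; [exact Hx|].
  exact (filterlim_comp _ _ _ _ _ _ _ _ (filterlim_uu_right_0 B x HB Hx) is_lim_profile3_div).
Qed.

Lemma filterlim_y4_right_0 B x : 0 < B -> 0 < x ->
  filterlim (fun t => y4 B t x) (at_right 0) (Rbar_locally m_infty).
Proof.
  intros HB Hx.
  apply (filterlim_ext (fun t => x * (profile4 (uu B t x) / uu B t x))).
  { intros t. rewrite y4_profile. symmetry. apply scl_mul_uu. lra. }
  apply filterlim_scal_pos_m_infty; [exact Hx|].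
  exact (filterlim_comp _ _ _ _ _ _ _ _ (filterlim_uu_right_0 B x HB Hx) is_lim_profile4_div).
Qed.

Lemma is_lim_y1_m_infty B t : is_lim (fun x => y1 B t x) m_infty m_infty.
Proof.
  apply (is_lim_ext (fun x => - y3 B t (- x))); [intros x; symmetry; apply y1_reflect|].
  apply (is_lim_opp _ _ p_infty).
  exact (filterlim_comp _ _ _ _ _ _ _ _ (is_lim_opp _ _ _ (is_lim_id m_infty))
           (is_lim_y3_p_infty B t)).
Qed.

Lemma is_lim_y2_m_infty B t : is_lim (fun x => y2 B t x) m_infty m_infty.
Proof.
  apply (is_lim_ext (fun x => y4 B t (- x))); [intros x; symmetry; apply y2_reflect|].
  exact (filterlim_comp _ _ _ _ _ _ _ _ (is_lim_opp _ _ _ (is_lim_id m_infty))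
           (is_lim_y4_p_infty B t)).
Qed.

Lemma filterlim_y1_right_0 B x : 0 < B -> 0 < x ->
  filterlim (fun t => y1 B t (- x)) (at_right 0) (Rbar_locally m_infty).
Proof.
  intros HB Hx.
  apply (filterlim_ext (fun t => - y3 B t x)); [intros t; now rewrite y1_reflect, Ropp_involutive|].
  exact (filterlim_comp _ _ _ _ _ _ _ _ (filterlim_y3_right_0 B x HB Hx)
           (is_lim_opp _ _ _ (is_lim_id p_infty))).
Qed.

Lemma filterlim_y2_right_0 B x : 0 < B -> 0 < x ->
  filterlim (fun t => y2 B t (- x)) (at_right 0) (Rbar_locally m_infty).
Proof.
  intros HB Hx.
  apply (filterlim_ext (fun t => y4 B t x)); [intros t; now rewrite y2_reflect, Ropp_involutive|].
  now apply filterlim_y4_right_0.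
Qed.

Theorem lemma2 (B : R) (HB : 0 < B) :
  (forall t : R, 0 < t ->
     is_lim (fun x => y3 B t x) p_infty p_infty /\
     is_lim (fun x => y4 B t x) p_infty m_infty /\
     is_lim (fun x => y1 B t x) m_infty m_infty /\
     is_lim (fun x => y2 B t x) m_infty m_infty) /\
  (forall x : R, 0 < x ->
     filterlim (fun t => y3 B t x) (at_right 0) (Rbar_locally p_infty) /\
     filterlim (fun t => y4 B t x) (at_right 0) (Rbar_locally m_infty) /\
     filterlim (fun t => y1 B t (- x)) (at_right 0) (Rbar_locally m_infty) /\
     filterlim (fun t => y2 B t (- x)) (at_right 0) (Rbar_locally m_infty)).
Proof.
  split.
  - intros t _. repeat split.
    + apply is_lim_y3_p_infty.
    + apply is_lim_y4_p_infty.
    + apply is_lim_y1_m_infty.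
    + apply is_lim_y2_m_infty.
  - intros x Hx. repeat split.
    + now apply filterlim_y3_right_0.
    + now apply filterlim_y4_right_0.
    + now apply filterlim_y1_right_0.
    + now apply filterlim_y2_right_0.
Qed.
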